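(* Let $n\ge 2$, $R>1$, $a=6R$, and let $u'':[1,a]\to[0,\infty)$ satisfy $u''<R$. Let $f_t(x)$, $x\in[1,a]$, evolve by $$\dot f=u''(x)\left(\frac{f''}{1+f'^2}+(n-1)\frac{xf'-f}{x^2+f^2}\right)$$ with fixed boundary values. Then for $y_0$ sufficiently negative the following holds: if the graph of $f_0$ does not intersect the ball $B_R(3R,y_0)$, then the family of shrinking balls $B_{\sqrt{R^2-4Rt}}(3R,y_0)$ does not intersect the graphs of $f_t$, as long as the flow is defined (and $t<R/4$).
   Context: Here $u''$ is the second $\rho$-derivative of the potential $u(\rho)$ of a Calabi-symmetric K\''ahler form $\omega=i\partial\bar\partial u$ on the blowup of $\mathbb{P}^n$ at a point in the class $a[H]-[E]$, regarded as a function of the Legendre coordinate $x=u'(\rho)\in[1,a]$. *)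

From Stdlib Require Import Reals Lra.
From Coquelicot Require Import Coquelicot.
Open Scope R_scope.

Definition cont_on_strip (f : R -> R -> R) (T a : R) : Prop :=
  forall t x, 0 <= t < T -> 1 <= x <= a ->
  forall eps, 0 < eps -> exists del, 0 < del /\
    forall s y, 0 <= s < T -> 1 <= y <= a ->
      Rabs (s - t) < del -> Rabs (y - x) < del ->
      Rabs (f s y - f t x) < eps.

Definition is_flow (n : nat) (a : R) (upp : R -> R) (f : R -> R -> R) (T : R)
  : Prop :=
  cont_on_strip f T a /\
  (forall t, 0 <= t < T -> f t 1 = f 0 1 /\ f t a = f 0 a) /\
  exists ft fx fxx : R -> R -> R,
    forall t x, 0 < t < T -> 1 < x < a ->
      is_derive (fun s => f s x) t (ft t x) /\
      is_derive (f t) x (fx t x) /\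
      is_derive (fx t) x (fxx t x) /\
      ft t x = upp x * (fxx t x / (1 + (fx t x) ^ 2)
                 + (INR n - 1) * (x * fx t x - f t x) / (x ^ 2 + (f t x) ^ 2)).

Definition in_ball (r cx cy x y : R) : Prop :=
  (x - cx) ^ 2 + (y - cy) ^ 2 < r ^ 2.

From Stdlib Require Import Reals Lra Lia Classical IndefiniteDescription.
From Coquelicot Require Import Coquelicot.
Open Scope R_scope.

(* Barrier argument. For A < r^2 let g(t,x) be the squared distance from the
   graph point (x, f t x) to the centre (c, y0), minus the squared radius
   A - 4 r t. Then g > 0 at t = 0 and at the endpoints x = 1, x = a, so if g
   ever became negative there would be a first interior contact point. There
   g_t <= 0, g_x = 0 and g_xx >= 0; the last two show that (f - y0) times the
   curvature term, and (f - y0) times the rotational term of the equation, are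
   each >= -1 (the latter because y0 is very negative), so g_t = 2 (f - y0) f_t + 4 r
   >= 4 (r - u'') > 0, a contradiction. Letting A tend to r^2 gives the claim. *)

Lemma is_derive_pos_local_incr (h : R -> R) c l :
  is_derive h c l -> 0 < l ->
  exists d, 0 < d /\ forall k, 0 < k < d -> h (c - k) < h c < h (c + k).
Proof.
  intros Hh Hl. apply is_derive_Reals in Hh.
  destruct (Hh (l / 2)) as [d Hd]; [lra|].
  exists d. split; [apply cond_pos|]. intros k Hk.
  assert (quot : forall k', k' <> 0 -> Rabs k' < d -> l / 2 < (h (c + k') - h c) / k').
  { intros k' Hk'0 Hk'd. pose proof (Rabs_def2 _ _ (Hd k' Hk'0 Hk'd)). lra. }
  pose proof (quot k ltac:(lra) ltac:(rewrite Rabs_right; lra)) as Hr.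
  pose proof (quot (- k) ltac:(lra) ltac:(rewrite Rabs_left; lra)) as Hl'.
  assert (Er : h (c + k) - h c = (h (c + k) - h c) / k * k) by (field; lra).
  assert (El : h c - h (c + - k) = (h (c + - k) - h c) / - k * k) by (field; lra).
  replace (c - k) with (c + - k) by ring.
  split; nra.
Qed.

Lemma is_derive_le0_of_left_min (h : R -> R) c l d :
  is_derive h c l -> 0 < d -> (forall k, 0 < k < d -> h c <= h (c - k)) -> l <= 0.
Proof.
  intros Hh Hd Hmin. apply Rnot_lt_le. intros Hl.
  destruct (is_derive_pos_local_incr h c l Hh Hl) as [d' [Hd' Hincr]].
  pose proof (Rmin_pos d d' Hd Hd'). pose proof (Rmin_l d d'). pose proof (Rmin_r d d').
  pose proof (Hmin (Rmin d d' / 2) ltac:(lra)).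
  pose proof (Hincr (Rmin d d' / 2) ltac:(lra)).
  lra.
Qed.

Lemma is_derive_ge0_of_right_min (h : R -> R) c l d :
  is_derive h c l -> 0 < d -> (forall k, 0 < k < d -> h c <= h (c + k)) -> 0 <= l.
Proof.
  intros Hh Hd Hmin. apply Rnot_lt_le. intros Hl.
  destruct (is_derive_pos_local_incr _ c (- l) (is_derive_opp _ _ _ Hh) ltac:(lra))
    as [d' [Hd' Hincr]].
  pose proof (Rmin_pos d d' Hd Hd'). pose proof (Rmin_l d d'). pose proof (Rmin_r d d').
  pose proof (Hmin (Rmin d d' / 2) ltac:(lra)).
  pose proof (Hincr (Rmin d d' / 2) ltac:(lra)).
  unfold opp in *; simpl in *. lra.
Qed.

Lemma is_derive2_ge0_of_right_min (h h' : R -> R) c l d :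
  0 < d -> (forall y, c <= y <= c + d -> is_derive h y (h' y)) ->
  h' c = 0 -> is_derive h' c l ->
  (forall k, 0 < k < d -> h c <= h (c + k)) -> 0 <= l.
Proof.
  intros Hd Hh Hc Hh' Hmin. apply Rnot_lt_le. intros Hl.
  destruct (is_derive_pos_local_incr _ c (- l) (is_derive_opp _ _ _ Hh') ltac:(lra))
    as [d' [Hd' Hdecr]].
  set (k := Rmin d d' / 2).
  assert (Hk : 0 < k < d /\ k < d').
  { pose proof (Rmin_pos d d' Hd Hd'). pose proof (Rmin_l d d'). pose proof (Rmin_r d d').
    unfold k; lra. }
  destruct (MVT_cor2 h h' c (c + k)) as [xi [Hmvt Hxi]]; [lra| |].
  { intros y Hy. apply is_derive_Reals, Hh. lra. }
  assert (Hneg : h' xi < 0).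
  { pose proof (Hdecr (xi - c) ltac:(lra)) as Hx. unfold opp in Hx; simpl in Hx.
    replace (c + (xi - c)) with xi in Hx by ring. lra. }
  pose proof (Hmin k ltac:(lra)). nra.
Qed.

Lemma curvature_term_ge (D p q : R) :
  0 <= 1 + p ^ 2 + D * q -> -1 <= D * (q / (1 + p ^ 2)).
Proof.
  intros Hq.
  assert (Hw : 0 < 1 + p ^ 2) by nra.
  replace (D * (q / (1 + p ^ 2))) with ((1 + p ^ 2 + D * q) / (1 + p ^ 2) - 1) by (field; lra).
  pose proof (Rdiv_le_0_compat _ _ Hq Hw). lra.
Qed.

Lemma rotation_term_ge (N a c r x F y0 p : R) :
  0 <= N -> 0 < r -> 1 <= x <= a ->
  (x - c) ^ 2 + (F - y0) ^ 2 <= r ^ 2 ->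
  y0 <= - (N * (a * r + r) + 1 + r) ->
  (x - c) + (F - y0) * p = 0 ->
  -1 <= (F - y0) * (N * (x * p - F) / (x ^ 2 + F ^ 2)).
Proof.
  intros HN Hr Hx Hdist Hy0 Hperp.
  set (X := x - c) in *. set (D := F - y0) in *.
  set (M := N * (a * r + r) + 1).
  assert (HX : X <= r) by nra.
  assert (HD : - r <= D <= r) by (split; nra).
  assert (HF : F <= - M) by (unfold D, M in *; lra).
  assert (HM : 1 <= M).
  { assert (0 <= N * (a * r + r)) by (apply Rmult_le_pos; nra). unfold M; lra. }
  assert (Hpos : 0 < x ^ 2 + F ^ 2) by nra.
  assert (Hbound : N * (x * X + D * F) <= x ^ 2 + F ^ 2).
  { assert (x * X <= a * r) by nra.
    assert (D * F <= r * (- F)) by nra.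
    assert (0 <= N * (a * r)) by (apply Rmult_le_pos; nra).
    assert (N * (a * r) <= N * (a * r) * (- F)) by nra.
    assert (M * (- F) <= F ^ 2) by nra.
    unfold M in *. nra. }
  replace (D * (N * (x * p - F) / (x ^ 2 + F ^ 2)))
    with ((x ^ 2 + F ^ 2 - N * (x * X + D * F)) / (x ^ 2 + F ^ 2) - 1).
  - pose proof (Rdiv_le_0_compat (x ^ 2 + F ^ 2 - N * (x * X + D * F)) _ ltac:(lra) Hpos). lra.
  - replace X with (- (D * p)) by lra. field. lra.
Qed.

Section StripContinuity.

Variables T a : R.

Lemma cont_on_strip_ext (f g : R -> R -> R) :
  (forall s y, f s y = g s y) -> cont_on_strip f T a -> cont_on_strip g T a.
Proof.
  intros Efg Hf t x Ht Hx e He.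
  destruct (Hf t x Ht Hx e He) as [d [Hd Hd']].
  exists d. split; [exact Hd|]. intros s y Hs Hy Hst Hyx.
  rewrite <- !Efg. auto.
Qed.

Lemma cont_on_strip_const k : cont_on_strip (fun _ _ => k) T a.
Proof.
  intros t x _ _ e He. exists 1. split; [lra|]. intros. rewrite Rminus_diag, Rabs_R0. exact He.
Qed.

Lemma cont_on_strip_time : cont_on_strip (fun s _ => s) T a.
Proof. intros t x _ _ e He. exists e. split; [exact He|]. intros; assumption. Qed.

Lemma cont_on_strip_space : cont_on_strip (fun _ y => y) T a.
Proof. intros t x _ _ e He. exists e. split; [exact He|]. intros; assumption. Qed.

Lemma cont_on_strip_pair (f g : R -> R -> R) t x e1 e2 :
  cont_on_strip f T a -> cont_on_strip g T a -> 0 <= t < T -> 1 <= x <= a ->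
  0 < e1 -> 0 < e2 ->
  exists d, 0 < d /\ forall s y, 0 <= s < T -> 1 <= y <= a ->
    Rabs (s - t) < d -> Rabs (y - x) < d ->
    Rabs (f s y - f t x) < e1 /\ Rabs (g s y - g t x) < e2.
Proof.
  intros Hf Hg Ht Hx He1 He2.
  destruct (Hf t x Ht Hx e1 He1) as [df [Hdf Hf']].
  destruct (Hg t x Ht Hx e2 He2) as [dg [Hdg Hg']].
  exists (Rmin df dg). split; [apply Rmin_pos; assumption|].
  intros s y Hs Hy Hst Hyx.
  pose proof (Rmin_l df dg). pose proof (Rmin_r df dg).
  split; [apply Hf' | apply Hg']; auto; lra.
Qed.

Lemma cont_on_strip_minus (f g : R -> R -> R) :
  cont_on_strip f T a -> cont_on_strip g T a ->
  cont_on_strip (fun s y => f s y - g s y) T a.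
Proof.
  intros Hf Hg t x Ht Hx e He.
  destruct (cont_on_strip_pair f g t x (e / 2) (e / 2) Hf Hg Ht Hx) as [d [Hd Hd']]; [lra|lra|].
  exists d. split; [exact Hd|]. intros s y Hs Hy Hst Hyx.
  destruct (Hd' s y Hs Hy Hst Hyx) as [Hfd Hgd].
  replace (f s y - g s y - (f t x - g t x)) with ((f s y - f t x) - (g s y - g t x)) by ring.
  pose proof (Rabs_triang_inv2 (f s y - f t x) (g s y - g t x)).
  eapply Rle_lt_trans; [apply Rabs_triang|]. rewrite Rabs_Ropp. lra.
Qed.

Lemma cont_on_strip_plus (f g : R -> R -> R) :
  cont_on_strip f T a -> cont_on_strip g T a ->
  cont_on_strip (fun s y => f s y + g s y) T a.
Proof.
  intros Hf Hg t x Ht Hx e He.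
  destruct (cont_on_strip_pair f g t x (e / 2) (e / 2) Hf Hg Ht Hx) as [d [Hd Hd']]; [lra|lra|].
  exists d. split; [exact Hd|]. intros s y Hs Hy Hst Hyx.
  destruct (Hd' s y Hs Hy Hst Hyx) as [Hfd Hgd].
  replace (f s y + g s y - (f t x + g t x)) with ((f s y - f t x) + (g s y - g t x)) by ring.
  eapply Rle_lt_trans; [apply Rabs_triang|]. lra.
Qed.

Lemma cont_on_strip_mult (f g : R -> R -> R) :
  cont_on_strip f T a -> cont_on_strip g T a ->
  cont_on_strip (fun s y => f s y * g s y) T a.
Proof.
  intros Hf Hg t x Ht Hx e He.
  set (mf := Rabs (f t x) + 1). set (mg := Rabs (g t x) + 1).
  assert (Hmf : 0 < mf) by (pose proof (Rabs_pos (f t x)); unfold mf; lra).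
  assert (Hmg : 0 < mg) by (pose proof (Rabs_pos (g t x)); unfold mg; lra).
  destruct (cont_on_strip_pair f g t x (e / (2 * mg)) (Rmin 1 (e / (2 * mf))) Hf Hg Ht Hx)
    as [d [Hd Hd']].
  { apply Rdiv_lt_0_compat; lra. }
  { apply Rmin_pos; [lra|]. apply Rdiv_lt_0_compat; lra. }
  exists d. split; [exact Hd|]. intros s y Hs Hy Hst Hyx.
  destruct (Hd' s y Hs Hy Hst Hyx) as [Hfd Hgd].
  pose proof (Rmin_l 1 (e / (2 * mf))). pose proof (Rmin_r 1 (e / (2 * mf))).
  assert (Hgs : Rabs (g s y) <= mg).
  { pose proof (Rabs_triang_inv (g s y) (g t x)). unfold mg. lra. }
  assert (E1 : e / (2 * mg) * mg = e / 2) by (field; lra).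
  assert (E2 : e / (2 * mf) * mf = e / 2) by (field; lra).
  replace (f s y * g s y - f t x * g t x)
    with ((f s y - f t x) * g s y + f t x * (g s y - g t x)) by ring.
  eapply Rle_lt_trans; [apply Rabs_triang|]. rewrite !Rabs_mult.
  assert (Rabs (f s y - f t x) * Rabs (g s y) <= e / (2 * mg) * mg).
  { apply Rmult_le_compat; try apply Rabs_pos; lra. }
  assert (Rabs (f t x) * Rabs (g s y - g t x) < mf * (e / (2 * mf))).
  { apply Rle_lt_trans with (Rabs (f t x) * (e / (2 * mf))).
    - apply Rmult_le_compat_l; [apply Rabs_pos | lra].
    - apply Rmult_lt_compat_r; [apply Rdiv_lt_0_compat; lra | unfold mf; lra]. }
  lra.
Qed.

Lemma cont_on_strip_nonneg_of_pos_before (H : R -> R -> R) t y :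
  cont_on_strip H T a -> 0 < t < T -> 1 <= y <= a ->
  (forall s, 0 <= s < t -> 0 < H s y) -> 0 <= H t y.
Proof.
  intros Hc Ht Hy Hpos. apply Rnot_lt_le. intros Hneg.
  destruct (Hc t y ltac:(lra) Hy (- H t y) ltac:(lra)) as [d [Hd Hd']].
  set (s := Rmax 0 (t - d / 2)).
  assert (Hs : 0 <= s < t /\ t - d / 2 <= s).
  { pose proof (Rmax_l 0 (t - d / 2)). pose proof (Rmax_r 0 (t - d / 2)).
    pose proof (Rmax_lub_lt 0 (t - d / 2) t ltac:(lra) ltac:(lra)). unfold s; lra. }
  pose proof (Hd' s y ltac:(lra) Hy ltac:(apply Rabs_def1; lra)
    ltac:(rewrite Rminus_diag, Rabs_R0; lra)) as Hclose.
  apply Rabs_def2 in Hclose. pose proof (Hpos s ltac:(lra)). lra.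
Qed.

Lemma cont_on_strip_pos_uniform (H : R -> R -> R) t :
  cont_on_strip H T a -> 0 <= t < T -> (forall y, 1 <= y <= a -> 0 < H t y) ->
  exists d, 0 < d /\ forall s y, 0 <= s < T -> 1 <= y <= a -> Rabs (s - t) < d -> 0 < H s y.
Proof.
  intros Hc Ht Hpos.
  assert (Hloc : forall z, exists d : posreal, 1 <= z <= a ->
    forall s y, 0 <= s < T -> 1 <= y <= a -> Rabs (s - t) < d -> Rabs (y - z) < d -> 0 < H s y).
  { intros z. destruct (Rle_lt_dec 1 z); [destruct (Rle_lt_dec z a)|].
    - destruct (Hc t z Ht ltac:(lra) (H t z) (Hpos z ltac:(lra))) as [d [Hd Hd']].
      exists (mkposreal d Hd). intros _ s y Hs Hy Hst Hyz.
      pose proof (Rabs_def2 _ _ (Hd' s y Hs Hy Hst Hyz)). lra.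
    - exists (mkposreal 1 Rlt_0_1). lra.
    - exists (mkposreal 1 Rlt_0_1). lra. }
  destruct (functional_choice _ Hloc) as [delta Hdelta].
  (* [d] is a Lebesgue number of the cover of [1, a] by these neighbourhoods. *)
  destruct (compactness_value_1d 1 a delta) as [d Hd].
  exists d. split; [apply cond_pos|]. intros s y Hs Hy Hst.
  apply Rnot_le_lt. intros Hle. apply (Hd y Hy). intros [z [Hz [Hyz Hdz]]].
  apply (Rle_not_lt _ _ Hle). apply (Hdelta z Hz s y Hs Hy); lra.
Qed.

Lemma cont_on_strip_first_nonpos_time (H : R -> R -> R) t0 x0 :
  cont_on_strip H T a -> (forall y, 1 <= y <= a -> 0 < H 0 y) ->
  0 <= t0 < T -> 1 <= x0 <= a -> H t0 x0 <= 0 ->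
  exists ts, 0 < ts <= t0 /\ (forall s y, 0 <= s < ts -> 1 <= y <= a -> 0 < H s y) /\
    exists xs, 1 <= xs <= a /\ H ts xs <= 0.
Proof.
  intros Hc Hinit Ht0 Hx0 Hneg.
  (* [P] holds vacuously for negative [s], which makes it downward closed. *)
  set (P := fun s => s <= t0 /\
    forall tau y, 0 <= tau <= s -> 1 <= y <= a -> 0 < H tau y).
  assert (P_down : forall s' s, s' <= s -> P s -> P s').
  { intros s' s Hs' [Hst HP]. split; [lra|]. intros tau y Htau. apply HP. lra. }
  assert (P0 : P 0).
  { split; [lra|]. intros tau y Htau Hy. replace tau with 0 by lra. auto. }
  assert (Pbound : bound P) by (exists t0; intros s [Hs _]; exact Hs).
  assert (Pne : exists s, P s) by (exists 0; exact P0).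
  pose proof (completeness_any P P_down Pne Pbound) as Pbelow.
  destruct (completeness P Pbound Pne) as [ts [Hub Hlub]]. simpl in Pbelow.
  assert (Hts : 0 <= ts <= t0).
  { split; [apply Hub, P0 | apply Hlub; intros s [Hs _]; exact Hs]. }
  assert (Hbefore : forall s y, 0 <= s < ts -> 1 <= y <= a -> 0 < H s y).
  { intros s y Hs Hy. destruct (NNPP _ (Pbelow s (proj2 Hs))) as [_ HP].
    apply HP; lra. }
  assert (Htouch : exists xs, 1 <= xs <= a /\ H ts xs <= 0).
  { apply NNPP. intros Hnone.
    assert (Hpos : forall y, 1 <= y <= a -> 0 < H ts y).
    { intros y Hy. apply Rnot_le_lt. intros Hle. apply Hnone. exists y. auto. }
    destruct (cont_on_strip_pos_uniform H ts Hc ltac:(lra) Hpos) as [d [Hd Hnear]].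
    assert (Pext : forall s, s <= t0 -> s <= ts + d / 2 -> P s).
    { intros s Hst0 Hsd. split; [lra|]. intros tau y Htau Hy.
      destruct (Rlt_le_dec tau ts).
      - apply Hbefore; auto; lra.
      - apply Hnear; auto; [lra|]. apply Rabs_def1; lra. }
    destruct (Rle_lt_dec t0 (ts + d / 2)).
    - destruct (Pext t0 ltac:(lra) ltac:(lra)) as [_ HP].
      pose proof (HP t0 x0 ltac:(lra) Hx0). lra.
    - pose proof (Hub _ (Pext (ts + d / 2) ltac:(lra) ltac:(lra))). lra. }
  exists ts. split; [|split; assumption]. split; [|lra].
  destruct (Req_dec ts 0) as [E | E]; [|lra].
  destruct Htouch as [xs [Hxs Hle]]. rewrite E in Hle. pose proof (Hinit xs Hxs). lra.
Qed.

Lemma cont_on_strip_first_contact (H : R -> R -> R) t0 x0 :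
  cont_on_strip H T a ->
  (forall y, 1 <= y <= a -> 0 < H 0 y) ->
  (forall s, 0 <= s < T -> 0 < H s 1 /\ 0 < H s a) ->
  0 <= t0 < T -> 1 <= x0 <= a -> H t0 x0 <= 0 ->
  exists ts xs, 0 < ts <= t0 /\ 1 < xs < a /\ H ts xs = 0 /\
    (forall y, 1 <= y <= a -> 0 <= H ts y) /\ (forall s, 0 <= s < ts -> 0 < H s xs).
Proof.
  intros Hc Hinit Hends Ht0 Hx0 Hneg.
  destruct (cont_on_strip_first_nonpos_time H t0 x0 Hc Hinit Ht0 Hx0 Hneg)
    as [ts [Hts [Hbefore [xs [Hxs Hle]]]]].
  assert (Hat : forall y, 1 <= y <= a -> 0 <= H ts y).
  { intros y Hy. apply cont_on_strip_nonneg_of_pos_before; [exact Hc | lra | exact Hy |].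
    intros s Hs. apply Hbefore; auto. }
  assert (Hzero : H ts xs = 0) by (pose proof (Hat xs Hxs); lra).
  assert (Hxs_int : 1 < xs < a).
  { destruct (Hends ts ltac:(lra)) as [H1 Ha].
    split; apply Rnot_le_lt; intros Hend;
      [replace xs with 1 in Hzero by lra | replace xs with a in Hzero by lra]; lra. }
  exists ts, xs. repeat split; try lra; auto.
Qed.

End StripContinuity.

Section ShrinkingBall.

Variables (n : nat) (a c r y0 T : R) (upp : R -> R) (f ft fx fxx : R -> R -> R).

Hypothesis n_ge1 : (1 <= n)%nat.
Hypothesis r_pos : 0 < r.
Hypothesis ball_left : 1 < c - r.
Hypothesis ball_right : c + r < a.
Hypothesis upp_bound : forall x, 1 <= x <= a -> 0 <= upp x /\ upp x < r.
Hypothesis y0_deep : y0 <= - ((INR n - 1) * (a * r + r) + 1 + r).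
Hypothesis f_cont : cont_on_strip f T a.
Hypothesis f_pde : forall t x, 0 < t < T -> 1 < x < a ->
  is_derive (fun s => f s x) t (ft t x) /\
  is_derive (f t) x (fx t x) /\
  is_derive (fx t) x (fxx t x) /\
  ft t x = upp x * (fxx t x / (1 + (fx t x) ^ 2)
             + (INR n - 1) * (x * fx t x - f t x) / (x ^ 2 + (f t x) ^ 2)).
Hypothesis f0_outside : forall x, 1 <= x <= a -> ~ in_ball r c y0 x (f 0 x).

Variable A : R.
Hypothesis A_lt : A < r ^ 2.

Definition ball_gap (s y : R) : R := (y - c) ^ 2 + (f s y - y0) ^ 2 - (A - 4 * r * s).

Lemma ball_gap_cont : cont_on_strip ball_gap T a.
Proof.
  apply cont_on_strip_ext with (fun s y =>
    (y - c) * (y - c) + (f s y - y0) * (f s y - y0) - (A - 4 * r * s)).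
  { intros s y. unfold ball_gap. ring. }
  repeat first [ apply cont_on_strip_minus | apply cont_on_strip_plus
               | apply cont_on_strip_mult | apply cont_on_strip_const
               | apply cont_on_strip_time | apply cont_on_strip_space | exact f_cont ].
Qed.

Lemma ball_gap_init y : 1 <= y <= a -> 0 < ball_gap 0 y.
Proof. intros Hy. pose proof (f0_outside y Hy). unfold in_ball in *. unfold ball_gap. lra. Qed.

Lemma ball_gap_ends s : 0 <= s -> 0 < ball_gap s 1 /\ 0 < ball_gap s a.
Proof.
  intros Hs. unfold ball_gap.
  pose proof (pow2_ge_0 (f s 1 - y0)). pose proof (pow2_ge_0 (f s a - y0)).
  split; nra.
Qed.

Lemma ball_gap_derive_time s x : 0 < s < T -> 1 < x < a ->
  is_derive (fun s' => ball_gap s' x) s (2 * (f s x - y0) * ft s x + 4 * r).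
Proof.
  intros Hs Hx. destruct (f_pde s x Hs Hx) as [Dt _].
  unfold ball_gap. auto_derive; [exists (ft s x); exact Dt|].
  replace (Derive (fun s' => f s' x) s) with (ft s x) by (symmetry; apply is_derive_unique, Dt).
  ring.
Qed.

Lemma ball_gap_derive_space s y : 0 < s < T -> 1 < y < a ->
  is_derive (ball_gap s) y (2 * (y - c) + 2 * (f s y - y0) * fx s y).
Proof.
  intros Hs Hy. destruct (f_pde s y Hs Hy) as [_ [Dx _]].
  unfold ball_gap. auto_derive; [exists (fx s y); exact Dx|].
  replace (Derive (fun y' => f s y') y) with (fx s y) by (symmetry; apply is_derive_unique, Dx).
  ring.
Qed.

Lemma ball_gap_derive2_space s y : 0 < s < T -> 1 < y < a ->
  is_derive (fun y' => 2 * (y' - c) + 2 * (f s y' - y0) * fx s y') y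
    (2 + 2 * (fx s y ^ 2 + (f s y - y0) * fxx s y)).
Proof.
  intros Hs Hy. destruct (f_pde s y Hs Hy) as [_ [Dx [Dxx _]]].
  auto_derive; [split; [exists (fx s y); exact Dx | split; [exists (fxx s y); exact Dxx | easy]]|].
  replace (Derive (fun y' => f s y') y) with (fx s y) by (symmetry; apply is_derive_unique, Dx).
  replace (Derive (fun y' => fx s y') y) with (fxx s y) by (symmetry; apply is_derive_unique, Dxx).
  ring.
Qed.

Lemma ball_gap_no_first_contact ts xs :
  0 < ts < T -> 1 < xs < a -> ball_gap ts xs = 0 ->
  (forall y, 1 <= y <= a -> 0 <= ball_gap ts y) ->
  (forall s, 0 <= s < ts -> 0 < ball_gap s xs) -> False.
Proof.
  intros Hts Hxs Hzero Hmin Hbefore.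
  destruct (f_pde ts xs Hts Hxs) as [_ [_ [_ Hflow]]].
  set (F := f ts xs) in *. set (p := fx ts xs) in *.
  set (q := fxx ts xs) in *. set (v := ft ts xs) in *.
  assert (Htime : 2 * (F - y0) * v + 4 * r <= 0).
  { apply (is_derive_le0_of_left_min _ _ _ ts (ball_gap_derive_time ts xs Hts Hxs)); [lra|].
    intros k Hk. rewrite Hzero. left. apply Hbefore. lra. }
  set (d := Rmin (xs - 1) (a - xs)).
  assert (Hd : 0 < d /\ d <= xs - 1 /\ d <= a - xs).
  { unfold d. split; [apply Rmin_pos; lra|]. split; [apply Rmin_l | apply Rmin_r]. }
  assert (Hfirst : 2 * (xs - c) + 2 * (F - y0) * p = 0).
  { pose proof (ball_gap_derive_space ts xs Hts Hxs) as Dx.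
    apply Rle_antisym.
    - apply (is_derive_le0_of_left_min _ _ _ d Dx); [lra|].
      intros k Hk. rewrite Hzero. apply Hmin. lra.
    - apply (is_derive_ge0_of_right_min _ _ _ d Dx); [lra|].
      intros k Hk. rewrite Hzero. apply Hmin. lra. }
  assert (Hsecond : 0 <= 2 + 2 * (p ^ 2 + (F - y0) * q)).
  { apply (is_derive2_ge0_of_right_min (ball_gap ts)
      (fun y => 2 * (y - c) + 2 * (f ts y - y0) * fx ts y) xs _ (d / 2)); [lra| | exact Hfirst | |].
    - intros y Hy. apply ball_gap_derive_space; [exact Hts | lra].
    - apply ball_gap_derive2_space; assumption.
    - intros k Hk. rewrite Hzero. apply Hmin. lra. }
  destruct (upp_bound xs ltac:(lra)) as [Hu0 Hu1].
  assert (HN : 0 <= INR n - 1) by (apply le_INR in n_ge1; simpl in n_ge1; lra).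
  assert (Hdist : (xs - c) ^ 2 + (F - y0) ^ 2 <= r ^ 2).
  { unfold ball_gap in Hzero. fold F in Hzero. nra. }
  pose proof (curvature_term_ge (F - y0) p q ltac:(lra)) as Hcurv.
  pose proof (rotation_term_ge (INR n - 1) a c r xs F y0 p HN r_pos ltac:(lra) Hdist y0_deep
    ltac:(lra)) as Hrot.
  assert (Hv : (F - y0) * v = upp xs * ((F - y0) * (q / (1 + p ^ 2))
      + (F - y0) * ((INR n - 1) * (xs * p - F) / (xs ^ 2 + F ^ 2)))).
  { rewrite Hflow. unfold Rdiv. ring. }
  nra.
Qed.

Lemma ball_gap_nonneg t x : 0 <= t < T -> 1 <= x <= a -> 0 <= ball_gap t x.
Proof.
  intros Ht Hx. apply Rnot_lt_le. intros Hneg.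
  destruct (cont_on_strip_first_contact T a ball_gap t x ball_gap_cont ball_gap_init
    (fun s Hs => ball_gap_ends s (proj1 Hs)) Ht Hx ltac:(lra))
    as [ts [xs [Hts [Hxs [Hzero [Hmin Hbefore]]]]]].
  apply (ball_gap_no_first_contact ts xs); auto; lra.
Qed.

End ShrinkingBall.

Lemma shrinking_ball_avoids_graph n a c r y0 upp (f : R -> R -> R) T :
  (1 <= n)%nat -> 0 < r -> 1 < c - r -> c + r < a ->
  (forall x, 1 <= x <= a -> 0 <= upp x /\ upp x < r) ->
  y0 <= - ((INR n - 1) * (a * r + r) + 1 + r) ->
  is_flow n a upp f T ->
  (forall x, 1 <= x <= a -> ~ in_ball r c y0 x (f 0 x)) ->
  forall t x, 0 <= t < T -> 1 <= x <= a ->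
    r ^ 2 - 4 * r * t <= (x - c) ^ 2 + (f t x - y0) ^ 2.
Proof.
  intros Hn Hr Hl Hrt Hupp Hy0 [Hcont [_ [ft [fx [fxx Hpde]]]]] Hinit t x Ht Hx.
  apply Rle_plus_epsilon. intros eps Heps.
  pose proof (ball_gap_nonneg n a c r y0 T upp f ft fx fxx Hn Hr Hl Hrt Hupp Hy0 Hcont Hpde
    Hinit (r ^ 2 - eps) ltac:(lra) t x Ht Hx).
  unfold ball_gap in *. lra.
Qed.

Theorem proposition3p4 :
  forall (n : nat) (Rr : R), (2 <= n)%nat -> 1 < Rr ->
  forall upp : R -> R,
    (forall x, 1 <= x <= 6 * Rr -> 0 <= upp x /\ upp x < Rr) ->
  exists Y : R, forall y0 : R, y0 <= Y ->
  forall (f : R -> R -> R) (T : R),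
    is_flow n (6 * Rr) upp f T ->
    (forall x, 1 <= x <= 6 * Rr -> ~ in_ball Rr (3 * Rr) y0 x (f 0 x)) ->
    forall t, 0 <= t < T -> t < Rr / 4 ->
    forall x, 1 <= x <= 6 * Rr ->
      ~ in_ball (sqrt (Rr ^ 2 - 4 * Rr * t)) (3 * Rr) y0 x (f t x).
Proof.
  intros n Rr Hn HR upp Hupp.
  exists (- ((INR n - 1) * (6 * Rr * Rr + Rr) + 1 + Rr)).
  intros y0 Hy0 f T Hflow Hinit t Ht HtR x Hx.
  unfold in_ball. rewrite pow2_sqrt by nra.
  apply Rle_not_lt.
  assert (Hn1 : (1 <= n)%nat) by lia.
  apply (shrinking_ball_avoids_graph n (6 * Rr) (3 * Rr) Rr y0 upp f T); auto; lra.
Qed.
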